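(* Let $\mathcal{L}$ be a set closed under a binary connective $\wedge$ and a unary connective $\neg$, and let $\langle \mathcal{M}, \models, f\rangle$ be a restricted fC-model for $\mathcal{L}$ that behaves classically with respect to $\wedge$ and $\neg$, i.e. for every $m \in \mathcal{M}$ and $a, b \in \mathcal{L}$: $m \models a\wedge b$ iff ($m \models a$ and $m \models b$), and $m \models \neg a$ iff $m \not\models a$. Let $\mathcal{C}(A) = \overline{f(\widehat{A})}$ for $A \subseteq \mathcal{L}$. Then for all $A \subseteq \mathcal{L}$ and $a, b \in \mathcal{L}$: ($\wedge$-R) $\mathcal{C}(A \cup \{a\wedge b\}) = \mathcal{C}(A \cup \{a, b\})$; ($\neg$-R1) $\mathcal{C}(A \cup \{a, \neg a\}) = \mathcal{L}$; ($\neg$-R2) if $\mathcal{C}(A \cup \{\neg a\}) = \mathcal{L}$ then $a \in \mathcal{C}(A)$.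
   Context: An fC-model for $\mathcal{L}$ is a triple $\langle \mathcal{M}, \models, f\rangle$ where $\mathcal{M}$ is any set, $\models \subseteq \mathcal{M}\times\mathcal{L}$ is a binary relation, and $f: 2^{\mathcal{M}} \to 2^{\mathcal{M}}$ is defined on all subsets of $\mathcal{M}$ and satisfies, for all $X, Y \subseteq \mathcal{M}$: Contraction $f(X) \subseteq X$, and Local Cumulativity $f(X) \subseteq Y \subseteq X \Rightarrow f(Y) = f(X)$. It is restricted if also $f(X) = \emptyset \Rightarrow X = \emptyset$. For $A \subseteq \mathcal{L}$, $\widehat{A} = \{x \in \mathcal{M} : x \models a\ \forall a \in A\}$; for $X \subseteq \mathcal{M}$, $\overline{X} = \{a \in \mathcal{L} : x \models a\ \forall x \in X\}$. *)

Set Implicit Arguments.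

Definition subset {T : Type} (X Y : T -> Prop) : Prop := forall x, X x -> Y x.
Definition set_eq {T : Type} (X Y : T -> Prop) : Prop := forall x, X x <-> Y x.
Definition is_empty {T : Type} (X : T -> Prop) : Prop := forall x, ~ X x.

Record fC_model (L M : Type) := {
  sat : M -> L -> Prop;
  fsel : (M -> Prop) -> (M -> Prop);
  contraction : forall X, subset (fsel X) X;
  local_cumulativity : forall X Y,
      subset (fsel X) Y -> subset Y X -> set_eq (fsel Y) (fsel X)
}.

Definition restricted {L M : Type} (m : fC_model L M) : Prop :=
  forall X, is_empty (fsel m X) -> is_empty X.

Definition hat {L M : Type} (m : fC_model L M) (A : L -> Prop) : M -> Prop :=
  fun x => forall a, A a -> sat m x a.

Definition bar {L M : Type} (m : fC_model L M) (X : M -> Prop) : L -> Prop :=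
  fun a => forall x, X x -> sat m x a.

Definition Cn {L M : Type} (m : fC_model L M) (A : L -> Prop) : L -> Prop :=
  bar m (fsel m (hat m A)).

Definition setU {T : Type} (X Y : T -> Prop) : T -> Prop := fun x => X x \/ Y x.
Definition set1 {T : Type} (a : T) : T -> Prop := fun x => x = a.
Definition set2 {T : Type} (a b : T) : T -> Prop := fun x => x = a \/ x = b.
Definition setT {T : Type} : T -> Prop := fun _ => True.

(* Everything factors through [hat]. Classical [conj] makes [hat (A ∪ {a ∧ b})]
   and [hat (A ∪ {a, b})] the same set, and [f] respects set equality by local
   cumulativity. [hat (A ∪ {a, ¬a})] is empty, hence so is [f] of it, and [bar]
   of the empty set is all of L. If [C (A ∪ {¬a})] is all of L, then
   [f (hat (A ∪ {¬a}))] is empty because no element satisfies both [a] and [¬a];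
   restrictedness then empties [hat (A ∪ {¬a})], so every element of [hat A]
   satisfies [a], and [f (hat A) ⊆ hat A] gives [a ∈ C(A)]. *)
From Stdlib Require Import Classical.

Section Consequence.

Variables (L M : Type) (m : fC_model L M).

Lemma fsel_ext (X Y : M -> Prop) :
  set_eq X Y -> set_eq (fsel m X) (fsel m Y).
Proof.
  intros XY. apply (local_cumulativity m).
  - intros x Hx. apply XY, (contraction m Y x Hx).
  - intros x Hx. apply XY, Hx.
Qed.

Lemma bar_antitone (X Y : M -> Prop) :
  subset X Y -> subset (bar m Y) (bar m X).
Proof. intros XY c Hc x Hx. apply Hc, XY, Hx. Qed.

Lemma bar_empty (X : M -> Prop) : is_empty X -> set_eq (bar m X) setT.
Proof. intros X0 c. split; [easy|]. intros _ x Hx. destruct (X0 x Hx). Qed.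

Lemma hat_setU (A B : L -> Prop) (x : M) :
  hat m (setU A B) x <-> hat m A x /\ hat m B x.
Proof.
  unfold hat, setU. split.
  - intros H. split; intros c Hc; apply H; auto.
  - intros [HA HB] c [Hc | Hc]; auto.
Qed.

Lemma hat_set1 (a : L) (x : M) : hat m (set1 a) x <-> sat m x a.
Proof.
  unfold hat, set1. split.
  - intros H. apply H. reflexivity.
  - intros Ha c ->. exact Ha.
Qed.

Lemma hat_set2 (a b : L) (x : M) :
  hat m (set2 a b) x <-> sat m x a /\ sat m x b.
Proof.
  unfold hat, set2. split.
  - intros H. split; apply H; auto.
  - intros [Ha Hb] c [-> | ->]; assumption.
Qed.

Lemma Cn_ext (A B : L -> Prop) :
  set_eq (hat m A) (hat m B) -> set_eq (Cn m A) (Cn m B).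
Proof.
  intros AB. pose proof (fsel_ext _ _ AB) as F.
  intros c. split; apply bar_antitone; intros x Hx; apply F, Hx.
Qed.

Lemma Cn_hat_empty (A : L -> Prop) :
  is_empty (hat m A) -> set_eq (Cn m A) setT.
Proof.
  intros A0. apply bar_empty. intros x Hx. apply (A0 x), (contraction m), Hx.
Qed.

Lemma bar_hat_sub_Cn (A : L -> Prop) : subset (bar m (hat m A)) (Cn m A).
Proof. apply bar_antitone, contraction. Qed.

Lemma Cn_full_hat_empty (A : L -> Prop) :
  restricted m -> (forall x, exists c, ~ sat m x c) ->
  set_eq (Cn m A) setT -> is_empty (hat m A).
Proof.
  intros Hres unsat Afull. apply Hres. intros x Hx.
  destruct (unsat x) as [c Hc]. apply Hc, (proj2 (Afull c) I x Hx).
Qed.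

Variables (conj : L -> L -> L) (neg : L -> L).
Hypothesis Hconj : forall x a b, sat m x (conj a b) <-> sat m x a /\ sat m x b.
Hypothesis Hneg : forall x a, sat m x (neg a) <-> ~ sat m x a.

Lemma Cn_conj_R (A : L -> Prop) (a b : L) :
  set_eq (Cn m (setU A (set1 (conj a b)))) (Cn m (setU A (set2 a b))).
Proof.
  apply Cn_ext. intros x.
  rewrite !hat_setU, hat_set1, hat_set2, Hconj. reflexivity.
Qed.

Lemma Cn_neg_R1 (A : L -> Prop) (a : L) :
  set_eq (Cn m (setU A (set2 a (neg a)))) setT.
Proof.
  apply Cn_hat_empty. intros x.
  rewrite hat_setU, hat_set2, Hneg. tauto.
Qed.

Lemma Cn_neg_R2 (A : L -> Prop) (a : L) :
  restricted m -> set_eq (Cn m (setU A (set1 (neg a)))) setT -> Cn m A a.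
Proof.
  intros Hres Afull.
  assert (A0 : is_empty (hat m (setU A (set1 (neg a))))).
  { apply (Cn_full_hat_empty _ Hres); [|exact Afull].
    intros x. destruct (classic (sat m x a)) as [Ha | Ha].
    - exists (neg a). rewrite Hneg. tauto.
    - exists a. exact Ha. }
  apply bar_hat_sub_Cn. intros x Hx. apply NNPP. intros Ha.
  apply (A0 x). rewrite hat_setU, hat_set1, Hneg. tauto.
Qed.

End Consequence.

Theorem theorem3 (L M : Type) (conj : L -> L -> L) (neg : L -> L)
  (m : fC_model L M) (Hres : restricted m)
  (Hconj : forall x a b, sat m x (conj a b) <-> (sat m x a /\ sat m x b))
  (Hneg : forall x a, sat m x (neg a) <-> ~ sat m x a) :
  forall (A : L -> Prop) (a b : L),
    set_eq (Cn m (setU A (set1 (conj a b)))) (Cn m (setU A (set2 a b))) /\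
    set_eq (Cn m (setU A (set2 a (neg a)))) setT /\
    (set_eq (Cn m (setU A (set1 (neg a)))) setT -> Cn m A a).
Proof.
  intros A a b. split; [|split].
  - apply Cn_conj_R, Hconj.
  - apply Cn_neg_R1, Hneg.
  - apply Cn_neg_R2; assumption.
Qed.
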